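(* Let $K$ and $L$ be regular languages over an alphabet $\Sigma$. If for every $r\ge 1$ there is a tower of prefixes of height at least $r$ between $K$ and $L$, then there is an infinite tower of prefixes between $K$ and $L$.
   Context: A string $v$ is a prefix of $w$, written $v\le w$, if $w=vu$ for some string $u$. A sequence $(w_i)_{i=1}^r$ of strings is a tower of prefixes between languages $K$ and $L$ if $w_1\in K\cup L$ and for all $i=1,\dots,r-1$: $w_i\le w_{i+1}$, $w_i\in K$ implies $w_{i+1}\in L$, and $w_i\in L$ implies $w_{i+1}\in K$; $r$ is its height. An infinite tower of prefixes is an infinite sequence $(w_i)_{i\ge1}$ with the same properties. *)

From mathcomp Require Import all_boot.
Set Implicit Arguments. Unset Strict Implicit. Unset Printing Implicit Defensive.

Definition word (Sigma : finType) := seq Sigma.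
Definition language (Sigma : finType) := word Sigma -> Prop.

Record dfa (Sigma : finType) := DFA {
  dfa_state : finType;
  dfa_init : dfa_state;
  dfa_trans : dfa_state -> Sigma -> dfa_state;
  dfa_final : pred dfa_state }.

Definition dfa_accepts (Sigma : finType) (A : dfa Sigma) (w : word Sigma) : bool :=
  @dfa_final Sigma A (foldl (@dfa_trans Sigma A) (@dfa_init Sigma A) w).

Definition regular (Sigma : finType) (K : language Sigma) : Prop :=
  exists A : dfa Sigma, forall w, K w <-> dfa_accepts A w.

Definition tower_step (Sigma : finType) (K L : language Sigma) (u v : word Sigma) : Prop :=
  prefix u v /\ (K u -> L v) /\ (L u -> K v).

(* (w 0, ..., w (r-1)) is a tower of prefixes of height r between K and L
   (indices shifted by one w.r.t. the paper: w_i = w (i-1)). *)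
Definition tower (Sigma : finType) (K L : language Sigma) (w : nat -> word Sigma) (r : nat) : Prop :=
  1 <= r /\ (K (w 0) \/ L (w 0)) /\
  forall i, i.+1 < r -> tower_step K L (w i) (w i.+1).

Definition infinite_tower (Sigma : finType) (K L : language Sigma) (w : nat -> word Sigma) : Prop :=
  (K (w 0) \/ L (w 0)) /\ forall i, tower_step K L (w i) (w i.+1).

(* A finite tower of height exceeding the number of states of the product automaton
   for K and L visits some state twice, at positions i < j.  The segment from w_i to
   w_j can then be pumped: w_j = w_i x, and repeating x indefinitely while following
   the increments of the segment yields words in the same automaton states as the
   original segment, hence an infinite tower. *)

From mathcomp Require Import all_boot.
From mathcomp Require Import zify.

Set Implicit Arguments.
Unset Strict Implicit.
Unset Printing Implicit Defensive.

Lemma prefix_cat2l (T : eqType) (s a b : seq T) : prefix (s ++ a) (s ++ b) = prefix a b.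
Proof. by rewrite prefix_catr // eqxx. Qed.

Section Congruence.
Variables (Sigma : finType) (S : Type) (st : word Sigma -> S).

Definition right_congruent : Prop :=
  forall u u' z, st u = st u' -> st (u ++ z) = st (u' ++ z).

Definition saturates (K : language Sigma) : Prop :=
  forall u u', st u = st u' -> K u -> K u'.

Lemma tower_step_congr (K L : language Sigma) u v u' v' :
  saturates K -> saturates L -> st u = st u' -> st v = st v' ->
  prefix u' v' -> tower_step K L u v -> tower_step K L u' v'.
Proof.
move=> satK satL su sv pre [_ [hK hL]]; split=> //; split=> H.
- exact/(satL _ _ sv)/hK/(satK _ _ (esym su)).
- exact/(satK _ _ sv)/hL/(satL _ _ (esym su)).
Qed.

End Congruence.

Definition dfa_run (Sigma : finType) (A : dfa Sigma) (u : word Sigma) : dfa_state A :=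
  foldl (@dfa_trans _ A) (@dfa_init _ A) u.

Lemma regular2_finite_congruence (Sigma : finType) (K L : language Sigma) :
  regular K -> regular L ->
  exists (S : finType) (st : word Sigma -> S),
    [/\ right_congruent st, saturates st K & saturates st L].
Proof.
move=> [A hA] [B hB].
exists (dfa_state A * dfa_state B)%type, (fun u => (dfa_run A u, dfa_run B u)).
split.
- by move=> u u' z [eA eB]; rewrite /dfa_run !foldl_cat -/(dfa_run A u) eA -/(dfa_run B u) eB.
- by move=> u u' [eA _]; rewrite !hA /dfa_accepts -/(dfa_run A u) eA.
- by move=> u u' [_ eB]; rewrite !hB /dfa_accepts -/(dfa_run B u) eB.
Qed.

Lemma nat_pigeonhole (T : finType) (f : nat -> T) n :
  #|T| < n -> exists i j, [/\ i < j, j < n & f i = f j].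
Proof.
move=> ltTn; pose g (k : 'I_n) := f k.
have /injectivePn [a [b neq_ab gab]] : ~~ injectiveb g.
  apply/injectiveP => /leq_card; rewrite card_ord => lenT.
  by move: (leq_trans ltTn lenT); rewrite ltnn.
case: (ltngtP a b) => [ltab | ltba | eab].
- by exists a, b.
- by exists b, a.
- by move: neq_ab; rewrite (val_inj eab) eqxx.
Qed.

Section Pumping.
Variables (Sigma : finType) (K L : language Sigma) (S : Type) (st : word Sigma -> S).
Hypotheses (congr_st : right_congruent st) (satK : saturates st K) (satL : saturates st L).
Variables (v : nat -> word Sigma) (p : nat).
Hypothesis p_gt0 : 0 < p.
Hypothesis v0KL : K (v 0) \/ L (v 0).
Hypothesis v_step : forall k, k < p -> tower_step K L (v k) (v k.+1).
Hypothesis v_loop : st (v p) = st (v 0).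

Lemma prefix_v0 k : k <= p -> prefix (v 0) (v k).
Proof.
elim: k => [|k IH] le_kp; first exact: prefix_refl.
exact: prefix_trans (IH (ltnW le_kp)) (proj1 (v_step le_kp)).
Qed.

Definition increment k := drop (size (v 0)) (v k).

Lemma v_increment k : k <= p -> v k = v 0 ++ increment k.
Proof.
by move/prefix_v0; rewrite prefixE => /eqP Ev; rewrite /increment -{1}Ev cat_take_drop.
Qed.

Definition loop_power q := iter q (fun s => s ++ increment p) [::].

Lemma st_loop_power q z : st (v 0 ++ loop_power q ++ z) = st (v 0 ++ z).
Proof.
suff st_pow : st (v 0 ++ loop_power q) = st (v 0).
  by rewrite catA; apply: congr_st.
elim: q => [|q IH]; first by rewrite cats0.
rewrite /= catA (congr_st _ IH) -v_increment //; exact: v_loop.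
Qed.

Definition pumped q m := v 0 ++ loop_power q ++ increment m.

Lemma st_pumped q m : m <= p -> st (pumped q m) = st (v m).
Proof. by move=> le_mp; rewrite /pumped st_loop_power -v_increment. Qed.

Lemma pumped_wrap q : pumped q p = pumped q.+1 0.
Proof. by rewrite /pumped /increment drop_size cats0 /= catA. Qed.

Lemma pumped_step q m : m < p -> tower_step K L (pumped q m) (pumped q m.+1).
Proof.
move=> lt_mp; apply: (tower_step_congr satK satL _ _ _ (v_step lt_mp)).
- by rewrite st_pumped // ltnW.
- by rewrite st_pumped.
- move: (proj1 (v_step lt_mp)).
  by rewrite /pumped !prefix_cat2l (v_increment (ltnW lt_mp)) (v_increment lt_mp) prefix_cat2l.
Qed.

Definition pumped_seq n := pumped (n %/ p) (n %% p).

Lemma pumped_seqS n : pumped_seq n.+1 = pumped (n %/ p) (n %% p).+1.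
Proof.
rewrite /pumped_seq modnS divnS //; case: ifP => [dvd_pn1 | _] //.
have -> : (n %% p).+1 = p.
  have dvd_p : p %| (n %% p).+1.
    by rewrite -(dvdn_addr _ (dvdn_mull (n %/ p) (dvdnn p))) addnS -divn_eq.
  by apply/eqP; rewrite eqn_leq ltn_mod p_gt0 (dvdn_leq _ dvd_p).
by rewrite pumped_wrap.
Qed.

Lemma pumped_infinite_tower : infinite_tower K L pumped_seq.
Proof.
split=> [|n]; last by rewrite pumped_seqS; apply: pumped_step; rewrite ltn_mod.
have st0 : st (v 0) = st (pumped_seq 0) by rewrite /pumped_seq div0n mod0n st_pumped.
by case: v0KL => H; [left; apply: satK st0 H | right; apply: satL st0 H].
Qed.

End Pumping.

Lemma tower_KL (Sigma : finType) (K L : language Sigma) w h k :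
  tower K L w h -> k < h -> K (w k) \/ L (w k).
Proof.
move=> [_ [w0KL w_step]]; elim: k => [|k IH] lt_kh //.
have [_ [hK hL]] := w_step k lt_kh.
by case: (IH (ltnW lt_kh)) => H; [right; apply: hK | left; apply: hL].
Qed.

Lemma tower_repeated_state_infinite (Sigma : finType) (K L : language Sigma)
    (S : Type) (st : word Sigma -> S) w h i j :
  right_congruent st -> saturates st K -> saturates st L ->
  tower K L w h -> i < j -> j < h -> st (w i) = st (w j) ->
  exists w', infinite_tower K L w'.
Proof.
move=> congr_st satK satL tw lt_ij lt_jh st_ij.
have [_ [_ w_step]] := tw.
exists (pumped_seq (fun k => w (i + k)) (j - i)).
apply: (pumped_infinite_tower congr_st satK satL).
- by rewrite subn_gt0.
- by rewrite addn0; apply: tower_KL tw (ltn_trans lt_ij lt_jh).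
- by move=> k lt_k; rewrite addnS; apply: w_step; lia.
- by rewrite addn0 subnKC // ltnW.
Qed.

Theorem lemma13 (Sigma : finType) (K L : language Sigma) :
  regular K -> regular L ->
  (forall r, 1 <= r -> exists (h : nat) (w : nat -> word Sigma), r <= h /\ tower K L w h) ->
  exists w : nat -> word Sigma, infinite_tower K L w.
Proof.
move=> regK regL towers.
have [S [st [congr_st satK satL]]] := regular2_finite_congruence regK regL.
have [h [w [le_Sh tw]]] := towers #|S|.+1 isT.
have [i [j [lt_ij lt_jh st_ij]]] := nat_pigeonhole (fun k => st (w k)) le_Sh.
exact: tower_repeated_state_infinite congr_st satK satL tw lt_ij lt_jh st_ij.
Qed.
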